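(* Let $E$ be a graph with finitely many vertices and $K$ a field of characteristic $0$. Assume $E$ contains an edge $f$ which is the initial edge of an infinite path $q=fp$ (with $p$ an infinite path) such that $s(f)\ne r(f)=s(p)$. Then $\langle 1+2f^*,\ 1+2f\rangle$ is a non-cyclic free subgroup of $L_K(E)^\times$.
   Context: A graph $E=(E^0,E^1,r,s)$; $L_K(E)$ is the free associative $K$-algebra on $E^0\cup E^1\cup\{e^*\}$ subject to $vv'=\delta_{v,v'}v$, $s(e)e=er(e)=e$, $r(e)e^*=e^*s(e)=e^*$, $e^*f=\delta_{e,f}r(e)$, and $v=\sum_{s(e)=v}ee^*$ for every vertex $v$ emitting a finite nonzero number of edges; with $E^0$ finite it is unital with $1=\sum_v v$. An infinite path is $e_1e_2\cdots$ with $r(e_i)=s(e_{i+1})$, and its source is $s(e_1)$. *)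

From HB Require Import structures.
From mathcomp Require Import all_boot all_order all_algebra.
Set Implicit Arguments. Unset Strict Implicit. Unset Printing Implicit Defensive.
Import GRing.Theory.
Local Open Scope ring_scope.

Section Leavitt.
Variables (K : fieldType) (V : finType) (Ed : eqType) (s r : Ed -> V).

(* (P, X, Y) is a Leavitt E-family in the unital K-algebra B:
   P v ~ v, X e ~ e, Y e ~ e^*.  Since E^0 is finite, L_K(E) is unital with
   1 = sum_v v; we include this identity among the relations. *)
Definition leavitt_family (B : algType K) (P : V -> B) (X Y : Ed -> B) : Prop :=
  (forall v w, P v * P w = if v == w then P v else 0) /\
  [/\ (forall e, P (s e) * X e = X e /\ X e * P (r e) = X e),
      (forall e, P (r e) * Y e = Y e /\ Y e * P (s e) = Y e),
      (forall e e', Y e * X e' = if e == e' then P (r e) else 0),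
      (forall v (l : seq Ed), uniq l -> l != [::] ->
          (forall e, (s e == v) = (e \in l)) ->
          P v = \sum_(e <- l) X e * Y e)
    & 1 = \sum_(v : V) P v ].

Definition alg_hom (A B : algType K) (phi : A -> B) : Prop :=
  [/\ (forall x y, phi (x + y) = phi x + phi y),
      (forall (k : K) x, phi (k *: x) = k *: phi x),
      (forall x y, phi (x * y) = phi x * phi y)
    & phi 1 = 1].

(* A, with the family (P, X, Y), is (a copy of) the Leavitt path algebra
   L_K(E): the family is a Leavitt E-family and it is universal, i.e. every
   Leavitt E-family in any K-algebra B is the image of (P, X, Y) under a
   unique K-algebra homomorphism A -> B. *)
Definition is_leavitt_path_algebra (A : algType K) (P : V -> A) (X Y : Ed -> A)
  : Prop :=
  leavitt_family P X Y /\
  forall (B : algType K) (P' : V -> B) (X' Y' : Ed -> B),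
    leavitt_family P' X' Y' ->
    (exists phi : A -> B, alg_hom phi /\
       (forall v, phi (P v) = P' v) /\
       (forall e, phi (X e) = X' e) /\ (forall e, phi (Y e) = Y' e)) /\
    (forall phi psi : A -> B, alg_hom phi -> alg_hom psi ->
       (forall v, phi (P v) = P' v) -> (forall e, phi (X e) = X' e) ->
       (forall e, phi (Y e) = Y' e) ->
       (forall v, psi (P v) = P' v) -> (forall e, psi (X e) = X' e) ->
       (forall e, psi (Y e) = Y' e) ->
       forall x, phi x = psi x).

End Leavitt.

Definition infinite_path (V : Type) (Ed : Type) (s r : Ed -> V) (p : nat -> Ed)
  : Prop := forall i, r (p i) = s (p i.+1).

(* Words in the letters a, a^{-1}, b, b^{-1}: a letter is (g, i) with
   g = false for a, true for b, and i = true for the inverse. *)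
Definition reduced_word (w : seq (bool * bool)) : Prop :=
  forall k, (k.+1 < size w)%N ->
    ~ ((nth (false, false) w k).1 = (nth (false, false) w k.+1).1 /\
       (nth (false, false) w k).2 = ~~ (nth (false, false) w k.+1).2).

Definition eval_letter (R : nzRingType) (a ai b bi : R) (x : bool * bool) : R :=
  if x.1 then (if x.2 then bi else b) else (if x.2 then ai else a).

(* a and b are units of R that freely generate a free subgroup of R^x
   (of rank 2, in particular non-cyclic): no nonempty reduced word in
   a^{+-1}, b^{+-1} evaluates to 1. *)
Definition free_pair_of_units (R : nzRingType) (a b : R) : Prop :=
  exists ai bi : R,
    [/\ a * ai = 1, ai * a = 1, b * bi = 1, bi * b = 1 &
      forall w : seq (bool * bool), w != [::] -> reduced_word w ->
        \prod_(x <- w) eval_letter a ai b bi x != 1].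

From HB Require Import structures.
From mathcomp Require Import all_boot all_order all_algebra zify.
From mathcomp Require Import boolp classical_sets functions.
Set Implicit Arguments. Unset Strict Implicit. Unset Printing Implicit Defensive.
Import GRing.Theory.
Local Open Scope ring_scope.

(* Let q = f p.  On the space of K-valued functions on infinite paths the
   operators  v u(t) = [s(t_0) = v] u(t),  e u(t) = [t_0 = e] u(t_1 t_2 ...)
   and  e^* u(t) = [r(e) = s(t_0)] u(e t)  form a Leavitt E-family, so L_K(E)
   maps to them.  Because s(f) <> r(f), the images of 1 + 2f^* and 1 + 2f
   act on the pair of values (u(q), u(p)) as the Sanov matrices
   [[1,0],[2,1]] and [[1,2],[0,1]].  By ping-pong in Z^2 no nonempty reduced
   word in these matrices is the identity, and characteristic 0 transports
   this from Z to K.  The two elements are units since f f = f^* f^* = 0. *)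

Definition sanov_letter (R : pzRingType) (l : bool * bool) (v : R * R) : R * R :=
  let c : R := if l.2 then - 2%:R else 2%:R in
  if l.1 then (v.1 + c * v.2, v.2) else (v.1, v.2 + c * v.1).

Definition sanov_word (R : pzRingType) (w : seq (bool * bool)) (v : R * R) :=
  foldr (@sanov_letter R) v w.

Definition pingpong_region (l : bool * bool) (v : int * int) : bool :=
  let: (x, y) := if l.1 then (v.2, v.1) else v in
  let: y := if l.2 then - y else y in
  (0 < x < y) || (y < x < 0).

Lemma pingpong_step (l m : bool * bool) (v : int * int) :
  ~ (m.1 = l.1 /\ m.2 = ~~ l.2) -> pingpong_region m v ->
  pingpong_region l (sanov_letter l v).
Proof.
case: l m v => [[] []] [[] []] [x y] //= lm; try by case: lm.
all: rewrite /pingpong_region /sanov_letter /= => /orP reg; apply/orP; lia.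
Qed.

Definition pingpong_seed (l : bool * bool) : int * int :=
  (1, if l.2 then -1 else 1).

Lemma pingpong_seed_outside l m : ~~ pingpong_region m (pingpong_seed l).
Proof. by case: l m => [[] []] [[] []]. Qed.

Lemma pingpong_region_seed l :
  pingpong_region l (sanov_letter l (pingpong_seed l)).
Proof. by case: l => [[] []]. Qed.

Lemma reduced_word_behead l w : reduced_word (l :: w) -> reduced_word w.
Proof. by move=> red k; apply: (red k.+1). Qed.

Lemma pingpong_region_word l w : reduced_word (l :: w) ->
  pingpong_region l (sanov_word (l :: w) (pingpong_seed (last l w))).
Proof.
elim: w l => [|m w IHw] l red; first exact: pingpong_region_seed.
apply: (pingpong_step (m := m)); last exact: IHw (reduced_word_behead red).
by case=> m1 m2; apply: (red 0%N) => //=; rewrite m1 m2 negbK.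
Qed.

Lemma sanov_word_int_nontrivial w : w != [::] -> reduced_word w ->
  exists v : int * int, sanov_word w v != v.
Proof.
case: w => [//|l w] _ red; exists (pingpong_seed (last l w)).
apply: contraNneq (pingpong_seed_outside (last l w) l) => <-.
exact: pingpong_region_word.
Qed.

Lemma sanov_word_intr (R : pzRingType) w (v : int * int) :
  sanov_word w (v.1%:~R, v.2%:~R) =
  ((sanov_word w v).1%:~R, (sanov_word w v).2%:~R) :> R * R.
Proof.
elim: w => [|l w IHw] //=; rewrite IHw /sanov_letter.
by case: l => [[] []]; rewrite /= ?rmorphD ?rmorphM ?rmorphN.
Qed.

Lemma pchar0_intr_inj (F : fieldType) : [pchar F] =i pred0 ->
  injective (fun n : int => n%:~R : F).
Proof.
move=> /pcharf0P F0 m n /eqP; rewrite -subr_eq0 -intrB => /eqP mn0.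
apply/eqP; rewrite -subr_eq0; apply/eqP; move: (m - n) mn0 => [] k.
  by move/eqP; rewrite /= F0 => /eqP ->.
by rewrite NegzE mulrNz => /eqP; rewrite oppr_eq0 F0.
Qed.

Lemma sanov_word_nontrivial (F : fieldType) w : [pchar F] =i pred0 ->
  w != [::] -> reduced_word w -> exists v : F * F, sanov_word w v != v.
Proof.
move=> F0 w0 red; have [[x y] wv] := sanov_word_int_nontrivial w0 red.
exists (x%:~R, y%:~R); rewrite (sanov_word_intr _ _ (x, y)).
have intr_inj := pchar0_intr_inj F0; apply: contra wv.
by case: (sanov_word w (x, y)) => x' y' /eqP [/intr_inj -> /intr_inj ->].
Qed.

Section LinearEndomorphisms.
Variables (K : comPzRingType) (M : lmodType K).

Record endo := Endo { endo_fun :> M -> M; endo_linear : linear endo_fun }.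

HB.instance Definition _ (a : endo) :=
  GRing.isLinear.Build K M M *:%R a (endo_linear a).
HB.instance Definition _ := gen_eqMixin endo.
HB.instance Definition _ := gen_choiceMixin endo.

Lemma endoP (a b : endo) : a =1 b -> a = b.
Proof.
case: a b => [f fL] [g gL] /= /funext fg; subst g.
by rewrite (Prop_irrelevance fL gL).
Qed.

Fact endo0_linear : linear (fun _ : M => 0 : M).
Proof. by move=> k u v; rewrite scaler0 addr0. Qed.
Fact endoD_linear (a b : endo) : linear (fun u => a u + b u).
Proof. by move=> k u v; rewrite !linearP scalerDr addrACA. Qed.
Fact endoN_linear (a : endo) : linear (fun u => - a u).
Proof. by move=> k u v; rewrite linearP opprD scalerN. Qed.
Fact endo1_linear : linear (@id M).
Proof. by []. Qed.
Fact endoM_linear (a b : endo) : linear (fun u => a (b u)).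
Proof. by move=> k u v; rewrite !linearP. Qed.
Fact endoZ_linear (k : K) (a : endo) : linear (fun u => k *: a u).
Proof. by move=> c u v; rewrite linearP scalerDr !scalerA mulrC. Qed.

Definition endo0 := Endo endo0_linear.
Definition endoD a b := Endo (endoD_linear a b).
Definition endoN a := Endo (endoN_linear a).
Definition endo1 := Endo endo1_linear.
Definition endoM a b := Endo (endoM_linear a b).
Definition endoZ k a := Endo (endoZ_linear k a).

Fact endoDA : associative endoD.
Proof. by move=> a b c; apply: endoP => u /=; rewrite addrA. Qed.
Fact endoDC : commutative endoD.
Proof. by move=> a b; apply: endoP => u /=; rewrite addrC. Qed.
Fact endo0D : left_id endo0 endoD.
Proof. by move=> a; apply: endoP => u /=; rewrite add0r. Qed.
Fact endoND : left_inverse endo0 endoN endoD.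
Proof. by move=> a; apply: endoP => u /=; rewrite addNr. Qed.

HB.instance Definition _ :=
  GRing.isZmodule.Build endo endoDA endoDC endo0D endoND.

Fact endoMA : associative endoM.
Proof. by move=> a b c; apply: endoP. Qed.
Fact endo1M : left_id endo1 endoM.
Proof. by move=> a; apply: endoP. Qed.
Fact endoM1 : right_id endo1 endoM.
Proof. by move=> a; apply: endoP. Qed.
Fact endoMDl : left_distributive endoM endoD.
Proof. by move=> a b c; apply: endoP. Qed.
Fact endoMDr : right_distributive endoM endoD.
Proof. by move=> a b c; apply: endoP => u /=; rewrite linearD. Qed.

HB.instance Definition _ :=
  GRing.Zmodule_isPzRing.Build endo endoMA endo1M endoM1 endoMDl endoMDr.

Fact endoZA k l a : endoZ k (endoZ l a) = endoZ (k * l) a.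
Proof. by apply: endoP => u /=; rewrite scalerA. Qed.
Fact endoZ1 : left_id 1 endoZ.
Proof. by move=> a; apply: endoP => u /=; rewrite scale1r. Qed.
Fact endoZDr : right_distributive endoZ +%R.
Proof. by move=> k a b; apply: endoP => u /=; rewrite scalerDr. Qed.
Fact endoZDl a : {morph endoZ^~ a : k l / k + l}.
Proof. by move=> k l; apply: endoP => u /=; rewrite scalerDl. Qed.

HB.instance Definition _ :=
  GRing.Zmodule_isLmodule.Build K endo endoZA endoZ1 endoZDr endoZDl.

Fact endoZAl k (a b : endo) : k *: (a * b) = (k *: a) * b.
Proof. by apply: endoP. Qed.
Fact endoZAr k (a b : endo) : k *: (a * b) = a * (k *: b).
Proof. by apply: endoP => u /=; rewrite linearZ. Qed.

End LinearEndomorphisms.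

Section FunctionSpaceEndomorphisms.
Variables (K : comNzRingType) (T : pointedType).

Fact endo_fun_oner_neq0 : (1 : endo (T -> K^o)) != 0.
Proof.
apply/eqP => /(congr1 (fun a : endo (T -> K^o) => a (cst 1) point)) /eqP.
by rewrite oner_eq0.
Qed.

HB.instance Definition _ :=
  GRing.PzSemiRing_isNonZero.Build (endo (T -> K^o)) endo_fun_oner_neq0.
HB.instance Definition _ :=
  GRing.Lmodule_isLalgebra.Build K (endo (T -> K^o)) (@endoZAl _ _).
HB.instance Definition _ :=
  GRing.Lalgebra_isAlgebra.Build K (endo (T -> K^o)) (@endoZAr _ _).

End FunctionSpaceEndomorphisms.

Section SubstitutionOperators.
Variables (K : comPzRingType) (T : Type).
Implicit Types (c : pred T) (g : T -> T) (u : T -> K^o).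

Fact subst_op_linear c g :
  linear (fun u t => if c t then u (g t) else 0 : K^o).
Proof.
move=> k u v; apply/funext => t; rewrite !fctE.
by case: (c t); rewrite ?scaler0 ?addr0.
Qed.

Definition subst_op c g : endo (T -> K^o) := Endo (subst_op_linear c g).

Lemma subst_opE c g u t : subst_op c g u t = if c t then u (g t) else 0.
Proof. by []. Qed.

Lemma eq_subst_op c c' g g' :
  c =1 c' -> {in c, g =1 g'} -> subst_op c g = subst_op c' g'.
Proof.
move=> cc' gg'; apply: endoP => u; apply/funext => t; rewrite !subst_opE -cc'.
by case: ifP => // ct; rewrite gg'.
Qed.

Lemma subst_opM c g c' g' :
  subst_op c g * subst_op c' g' =
  subst_op [pred t | c t && c' (g t)] (g' \o g).
Proof. by apply: endoP => u; apply/funext => t /=; case: (c t). Qed.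

Lemma subst_op0 g : subst_op pred0 g = 0.
Proof. by apply: endoP. Qed.

Lemma subst_op1 : subst_op predT id = 1.
Proof. by apply: endoP. Qed.

Lemma sum_subst_op_fibers (I : eqType) (k : T -> I) (l : seq I) : uniq l ->
  \sum_(i <- l) subst_op [pred t | k t == i] id =
  subst_op [pred t | k t \in l] id.
Proof.
move=> l_uniq; apply: endoP => u; apply/funext => t.
rewrite (big_morph (fun a : endo (T -> K^o) => a u t) (id1 := 0) (op1 := +%R)) //.
rewrite subst_opE /=; case: ifP => ktl.
  rewrite (bigD1_seq (k t)) //= eqxx big1_seq ?addr0 // => i /andP[ki _] /=.
  by rewrite eq_sym (negbTE ki).
rewrite big1_seq // => i /= il.
by case: eqP => // ki; rewrite ki il in ktl.
Qed.

End SubstitutionOperators.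

Section SanovOperators.
Variables (K : comNzRingType) (T : pointedType) (x y : endo (T -> K^o)).
Variables (q p : T).
Hypotheses (xq : forall u, x u q = u p) (xp : forall u, x u p = 0).
Hypotheses (yq : forall u, y u q = 0) (yp : forall u, y u p = u q).

Definition sanov_op (l : bool * bool) : endo (T -> K^o) :=
  eval_letter (1 + 2%:R * y) (1 - 2%:R * y) (1 + 2%:R * x) (1 - 2%:R * x) l.

Lemma sanov_op_letter l u :
  (sanov_op l u q, sanov_op l u p) = sanov_letter l (u q, u p).
Proof.
by case: l => [[] []]; rewrite /sanov_op /sanov_letter /= ?mulNr !mulr_natl
  !mulr2n !fctE ?xq ?xp ?yq ?yp ?addr0 ?subr0.
Qed.

Lemma sanov_op_word w u :
  ((\prod_(l <- w) sanov_op l) u q, (\prod_(l <- w) sanov_op l) u p) =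
  sanov_word w (u q, u p).
Proof.
elim: w u => [|l w IHw] u; first by rewrite big_nil.
by rewrite big_cons /= -IHw -sanov_op_letter.
Qed.

End SanovOperators.

Lemma sanov_op_prod_neq1 (K : fieldType) (T : pointedType)
    (x y : endo (T -> K^o)) (q p : T) w :
  [pchar K] =i pred0 -> q != p ->
  (forall u, x u q = u p) -> (forall u, x u p = 0) ->
  (forall u, y u q = 0) -> (forall u, y u p = u q) ->
  w != [::] -> reduced_word w -> \prod_(l <- w) sanov_op x y l != 1.
Proof.
move=> K0 qp xq xp yq yp w0 red.
have [[v1 v2] wv] := sanov_word_nontrivial K0 w0 red.
pose u t : K^o := if t == q then v1 else v2.
apply: contraNneq wv => w1; have := sanov_op_word xq xp yq yp w u.
by rewrite w1 /u /= eqxx eq_sym (negbTE qp) => <-.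
Qed.

Lemma free_pair_of_units_morph (R S : nzRingType) (phi : R -> S)
    (a ai b bi : R) :
  {morph phi : x y / x * y} -> phi 1 = 1 ->
  a * ai = 1 -> ai * a = 1 -> b * bi = 1 -> bi * b = 1 ->
  (forall w, w != [::] -> reduced_word w ->
     \prod_(l <- w) eval_letter (phi a) (phi ai) (phi b) (phi bi) l != 1) ->
  free_pair_of_units a b.
Proof.
move=> phiM phi1 aai aia bbi bib free_im; exists ai, bi; split=> // w w0 red.
apply: contraNneq (free_im w w0 red) => w1.
rewrite -[X in _ == X]phi1 -w1 (big_morph phi phiM phi1).
by apply/eqP/eq_bigr => -[[] []].
Qed.

Lemma sqr0_unit (R : pzRingType) (z : R) : z * z = 0 ->
  (1 + z) * (1 - z) = 1 /\ (1 - z) * (1 + z) = 1.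
Proof.
move=> zz; split; first by rewrite mulrDl mul1r mulrBr mulr1 zz subr0 subrK.
by rewrite mulrBl mul1r mulrDr mulr1 zz addr0 addrK.
Qed.

Lemma sqr0_natmul (R : pzRingType) (z : R) n :
  z * z = 0 -> (n%:R * z) * (n%:R * z) = 0.
Proof. by move=> zz; rewrite !mulr_natl mulrnAl mulrnAr zz !mul0rn. Qed.

Section AlgHom.
Variables (K : fieldType) (A B : algType K) (phi : A -> B).
Hypothesis phi_hom : alg_hom phi.

Lemma alg_homN x : phi (- x) = - phi x.
Proof. by case: phi_hom => _ phiZ _ _; rewrite -scaleN1r phiZ scaleN1r. Qed.

Lemma alg_hom_nat n : phi n%:R = n%:R.
Proof.
by case: phi_hom => _ phiZ _ phi1; rewrite -(scaler_nat n 1) phiZ phi1 scaler_nat.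
Qed.

Lemma alg_hom_1Dnat n z : phi (1 + n%:R * z) = 1 + n%:R * phi z.
Proof.
by case: phi_hom => phiD _ phiM phi1; rewrite phiD phiM phi1 alg_hom_nat.
Qed.

Lemma alg_hom_1Bnat n z : phi (1 - n%:R * z) = 1 - n%:R * phi z.
Proof.
by case: phi_hom => phiD _ phiM phi1; rewrite phiD alg_homN phiM phi1 alg_hom_nat.
Qed.

End AlgHom.

Section LeavittFamily.
Variables (K : fieldType) (V : finType) (Ed : eqType) (s r : Ed -> V).
Variables (B : algType K) (P : V -> B) (X Y : Ed -> B).
Hypothesis family : leavitt_family s r P X Y.

Lemma leavitt_X_sqr0 e : s e != r e -> X e * X e = 0.
Proof.
case: family => PP [/(_ e) [sX Xr] _ _ _ _] sr.
have -> : X e * X e = X e * P (r e) * (P (s e) * X e) by rewrite sX Xr.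
by rewrite -mulrA (mulrA (P _)) PP eq_sym (negbTE sr) mul0r mulr0.
Qed.

Lemma leavitt_Y_sqr0 e : s e != r e -> Y e * Y e = 0.
Proof.
case: family => PP [_ /(_ e) [rY Ys] _ _ _] sr.
have -> : Y e * Y e = Y e * P (s e) * (P (r e) * Y e) by rewrite rY Ys.
by rewrite -mulrA (mulrA (P _)) PP (negbTE sr) mul0r mulr0.
Qed.

End LeavittFamily.

Section PathSpace.
Variables (V : finType) (Ed : eqType) (s r : Ed -> V).

Definition inf_path := {x : nat -> Ed | `[< infinite_path s r x >]}.

HB.instance Definition _ :=
  Equality.copy inf_path {x : nat -> Ed | `[< infinite_path s r x >]}.
HB.instance Definition _ := gen_choiceMixin inf_path.

Lemma inf_pathP (t : inf_path) : infinite_path s r (val t).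
Proof. exact/asboolP/(valP t). Qed.

Definition scons (e : Ed) (x : nat -> Ed) : nat -> Ed :=
  fun n => if n is n'.+1 then x n' else e.

Fact path_tail_subproof (t : inf_path) :
  `[< infinite_path s r (fun n => val t n.+1) >].
Proof. by apply/asboolP => i; apply: inf_pathP. Qed.

Definition path_tail (t : inf_path) : inf_path :=
  Sub (fun n => val t n.+1) (path_tail_subproof t).

Lemma infinite_path_scons e (t : inf_path) :
  `[< infinite_path s r (scons e (val t)) >] = (r e == s (val t 0)).
Proof.
case: t => x /= /asboolP x_path.
by apply/asboolP/eqP => [/(_ 0%N)|rex] // -[|i] /=.
Qed.

(* Prepending e is only meaningful when r(e) = s(t_0); otherwise t is returned. *)
Definition path_cons (e : Ed) (t : inf_path) : inf_path :=
  insubd t (scons e (val t)).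

Section PathCons.
Variables (e : Ed) (t : inf_path).
Hypothesis rt : r e = s (val t 0).

Lemma val_path_cons : val (path_cons e t) = scons e (val t).
Proof. by rewrite val_insubd infinite_path_scons rt eqxx. Qed.

Lemma path_cons_head : val (path_cons e t) 0 = e.
Proof. by rewrite val_path_cons. Qed.

Lemma path_tail_cons : path_tail (path_cons e t) = t.
Proof. by apply: val_inj; apply/funext => n /=; rewrite val_path_cons. Qed.

End PathCons.

Lemma path_cons_tail (t : inf_path) : path_cons (val t 0) (path_tail t) = t.
Proof.
apply: val_inj; rewrite val_path_cons ?inf_pathP //.
by apply/funext => -[|n].
Qed.

Variable K : fieldType.

Definition chen_P (v : V) : endo (inf_path -> K^o) :=
  subst_op K [pred t : inf_path | s (val t 0) == v] id.
Definition chen_X (e : Ed) : endo (inf_path -> K^o) :=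
  subst_op K [pred t : inf_path | val t 0 == e] path_tail.
Definition chen_Y (e : Ed) : endo (inf_path -> K^o) :=
  subst_op K [pred t : inf_path | r e == s (val t 0)] (path_cons e).

Lemma chen_PP v w : chen_P v * chen_P w = if v == w then chen_P v else 0.
Proof.
rewrite /chen_P subst_opM; case: eqP => [<-|vw].
  by apply: eq_subst_op => // t /=; rewrite andbb.
rewrite -(subst_op0 _ id); apply: eq_subst_op => // t /=.
by apply/andP => -[/eqP-> /eqP].
Qed.

Lemma chen_PX e :
  chen_P (s e) * chen_X e = chen_X e /\ chen_X e * chen_P (r e) = chen_X e.
Proof.
rewrite /chen_P /chen_X !subst_opM; split; apply: eq_subst_op => // t /=.
  by apply/andb_idl => /eqP <-.
by rewrite -inf_pathP; apply/andb_idr => /eqP <-.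
Qed.

Lemma chen_PY e :
  chen_P (r e) * chen_Y e = chen_Y e /\ chen_Y e * chen_P (s e) = chen_Y e.
Proof.
rewrite /chen_P /chen_Y !subst_opM; split; apply: eq_subst_op => // t /=.
  by rewrite eq_sym andbb.
by apply/andb_idr => /eqP rt; rewrite path_cons_head.
Qed.

Lemma chen_YX e e' :
  chen_Y e * chen_X e' = if e == e' then chen_P (r e) else 0.
Proof.
rewrite /chen_P /chen_Y /chen_X subst_opM; case: eqP => [<-|ee'].
  apply: eq_subst_op => [t|t /andP[/eqP rt _]] /=; last exact: path_tail_cons.
  by rewrite eq_sym; apply/andb_idr => /eqP/esym rt; rewrite path_cons_head.
rewrite -(subst_op0 _ (path_tail \o path_cons e)).
apply: eq_subst_op => // t /=.
by apply/andP => -[/eqP rt]; rewrite path_cons_head // => /eqP.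
Qed.

Lemma chen_XY e : chen_X e * chen_Y e = subst_op K [pred t | val t 0 == e] id.
Proof.
rewrite /chen_X /chen_Y subst_opM.
apply: eq_subst_op => [t|t /andP[/eqP t0 _]] /=; last first.
  by rewrite -t0 path_cons_tail.
by rewrite -inf_pathP; apply/andb_idr => /eqP <-.
Qed.

Lemma chen_CK v (l : seq Ed) : uniq l -> (forall e, (s e == v) = (e \in l)) ->
  chen_P v = \sum_(e <- l) chen_X e * chen_Y e.
Proof.
move=> l_uniq sl; under eq_bigr do rewrite chen_XY.
by rewrite sum_subst_op_fibers //; apply: eq_subst_op => // t /=; rewrite sl.
Qed.

Lemma chen_sum_P : 1 = \sum_(v : V) chen_P v.
Proof.
rewrite sum_subst_op_fibers ?index_enum_uniq // -subst_op1.
by apply: eq_subst_op => // t; rewrite /= mem_index_enum.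
Qed.

Section ChenFamily.
Variable p : inf_path.

(* endo (inf_path -> K^o) is a nonzero algebra only when some path exists. *)
HB.instance Definition _ := isPointed.Build inf_path p.

Lemma chen_leavitt_family : leavitt_family s r chen_P chen_X chen_Y.
Proof.
split; first exact: chen_PP.
split=> [e|e|e e'|v l l_uniq _ sl|].
- exact: chen_PX.
- exact: chen_PY.
- exact: chen_YX.
- exact: chen_CK.
- exact: chen_sum_P.
Qed.

Variable f : Ed.
Hypotheses (rf : r f = s (val p 0)) (sf : s f != r f).
Let q := path_cons f p.

Lemma chen_X_cons u : chen_X f u q = u p.
Proof. by rewrite subst_opE /= path_cons_head // eqxx path_tail_cons. Qed.

Lemma chen_X_tail u : chen_X f u p = 0.
Proof.
rewrite subst_opE /=; case: eqP => // p0.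
by move: sf; rewrite rf -p0 eqxx.
Qed.

Lemma chen_Y_cons u : chen_Y f u q = 0.
Proof. by rewrite subst_opE /= path_cons_head // eq_sym (negbTE sf). Qed.

Lemma chen_Y_tail u : chen_Y f u p = u q.
Proof. by rewrite subst_opE /= rf eqxx. Qed.

Lemma cons_neq_tail : q != p.
Proof.
apply: contraNneq sf => /(congr1 (fun t : inf_path => val t 0)).
by rewrite path_cons_head // rf => <-.
Qed.

Theorem chen_free_pair (A : algType K) (P : V -> A) (X Y : Ed -> A) :
  [pchar K] =i pred0 -> is_leavitt_path_algebra s r P X Y ->
  free_pair_of_units (1 + 2%:R * Y f) (1 + 2%:R * X f).
Proof.
move=> K0 [family univ].
have [[phi [phi_hom [_ [phiX phiY]]]] _] := univ _ _ _ _ chen_leavitt_family.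
have [Yu Yu'] := sqr0_unit (sqr0_natmul 2 (leavitt_Y_sqr0 family sf)).
have [Xu Xu'] := sqr0_unit (sqr0_natmul 2 (leavitt_X_sqr0 family sf)).
have [_ _ phiM phi1] := phi_hom.
apply: (free_pair_of_units_morph phiM phi1 Yu Yu' Xu Xu') => w w0 red.
rewrite !alg_hom_1Dnat // !alg_hom_1Bnat // phiX phiY.
exact: sanov_op_prod_neq1 K0 cons_neq_tail
  chen_X_cons chen_X_tail chen_Y_cons chen_Y_tail w0 red.
Qed.

End ChenFamily.

End PathSpace.

Theorem lemma4p7 (K : fieldType) (V : finType) (Ed : eqType) (s r : Ed -> V)
    (A : algType K) (P : V -> A) (X Y : Ed -> A) (f : Ed) :
  [pchar K] =i pred0 ->
  is_leavitt_path_algebra s r P X Y ->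
  (exists p : nat -> Ed, infinite_path s r p /\ r f = s (p 0%N)) ->
  s f != r f ->
  free_pair_of_units (1 + 2%:R * Y f) (1 + 2%:R * X f).
Proof.
move=> K0 L [p [p_path rf]] sf.
exact: (chen_free_pair (p := Sub p (asboolT p_path)) rf sf K0 L).
Qed.
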